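(* Consider the exponential-push content-access game described in the context, with $\lambda_{ps}(G)>\lambda_{ps}(B)>0$, $\pi_B=1-\pi_G>0$, and a common threshold $0\le\alpha<N$ of the other users. Let $\beta_1^*(\alpha)$ denote a maximizer of $U(\alpha,\beta)$ over $\beta\in[0,\alpha]$. Then: (i) if $\frac{\pi_G}{\pi_B} < \frac{\lambda_{ps}(G)}{\lambda_{ps}(B)}$, then $\beta^*_1(\alpha)=\alpha$; (ii) if $\frac{\pi_G}{\pi_B} > \frac{\lambda_{ps}(G)}{\lambda_{ps}(B)}$, then $\beta^*_1(\alpha)=0$; (iii) if $\frac{\pi_G}{\pi_B} = \frac{\lambda_{ps}(G)}{\lambda_{ps}(B)}$, then every $\beta\in[0,\alpha]$ is optimal.
   Context: A content has a type $\theta\in\{G,B\}$ (good/bad) and lifetime $\tau>0$; users believe it is good with probability $\pi_G$ and bad with probability $\pi_B=1-\pi_G$. Users use threshold strategies on the viewcount: all users other than a tagged user access the content once the viewcount reaches $\alpha$; the tagged user uses threshold $\beta$. Exponential push dynamics with $N>0$ potential push users: for type $\theta$ with push rate $\lambda_{ps}(\theta)>0$ and pull rate $\lambda_{pu}>0$, let $t_\alpha(\theta)=-\frac{1}{\lambda_{ps}(\theta)}\log(1-\alpha/N)$, and the viewcount is $X(t,\theta)=N(1-e^{-\lambda_{ps}(\theta)t})$ for $0\le t\le t_\alpha(\theta)$ and $X(t,\theta)=N(1-e^{-\lambda_{ps}(\theta)t})+\lambda_{pu}(t-t_\alpha(\theta))$ for $t\ge t_\alpha(\theta)$. For $\beta\ge0$,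 $t_\beta(\theta)=\min\{t\ge0: X(t,\theta)=\beta\}$. The tagged user's utility is $U(\alpha,\beta)=\pi_G(\tau-t_\beta(G))-\pi_B(\tau-t_\beta(B))$. *)

From Stdlib Require Import Reals.
From Coquelicot Require Import Coquelicot.
Open Scope R_scope.

Definition t_alpha (N lps alpha : R) : R := - / lps * ln (1 - alpha / N).

Definition viewcount (N lps lpu alpha t : R) : R :=
  if Rle_dec t (t_alpha N lps alpha) then N * (1 - exp (- lps * t))
  else N * (1 - exp (- lps * t)) + lpu * (t - t_alpha N lps alpha).

(* t_beta(theta) = min { t >= 0 : X(t, theta) = beta }, rendered as the
   infimum of that set (which equals the minimum whenever it exists). *)
Definition t_beta (N lps lpu alpha beta : R) : R :=
  real (Glb_Rbar (fun t => 0 <= t /\ viewcount N lps lpu alpha t = beta)).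

Definition utility (tau piG N lG lB lpu alpha beta : R) : R :=
  piG * (tau - t_beta N lG lpu alpha beta)
  - (1 - piG) * (tau - t_beta N lB lpu alpha beta).

Definition is_maximizer (f : R -> R) (alpha beta : R) : Prop :=
  0 <= beta <= alpha /\ forall b, 0 <= b <= alpha -> f b <= f beta.

(** Up to the threshold [alpha], only the push phase matters, and reaching a
    viewcount [b] takes time [- ln (1 - b/N) / lambda].  Hence on [[0, alpha]]
    the utility is an affine function of the strictly increasing quantity
    [- ln (1 - b/N)], with slope [pi_B / lambda_B - pi_G / lambda_G]; the sign
    of that slope, i.e. the comparison of [pi_G / pi_B] with
    [lambda_G / lambda_B], decides whether the utility increases, decreases or
    is constant in [beta]. *)

From Stdlib Require Import Reals Lra.
From Coquelicot Require Import Coquelicot.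
Open Scope R_scope.

Lemma Glb_Rbar_singleton (P : R -> Prop) (t0 : R) :
  (forall t, P t <-> t = t0) -> real (Glb_Rbar P) = t0.
Proof.
  intro HP. rewrite (is_glb_Rbar_unique _ (Finite t0)); [reflexivity|]. split.
  - intros x Hx. apply HP in Hx. subst. simpl. lra.
  - intros m Hm. apply Hm, HP. reflexivity.
Qed.

Definition unit_rate_time (N b : R) : R := - ln (1 - b / N).

Section UnitRateTime.

Variable N : R.
Hypothesis HN : 0 < N.

Lemma one_sub_div_pos (b : R) : b < N -> 0 < 1 - b / N.
Proof.
  intro Hb. assert (b / N < 1) by (apply Rmult_lt_reg_r with N; [lra|]; field_simplify; lra).
  lra.
Qed.

Lemma unit_rate_time_0 : unit_rate_time N 0 = 0.
Proof. unfold unit_rate_time. rewrite Rdiv_0_l, Rminus_0_r, ln_1. ring. Qed.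

Lemma unit_rate_time_lt (b1 b2 : R) :
  b1 < b2 -> b2 < N -> unit_rate_time N b1 < unit_rate_time N b2.
Proof.
  intros H12 H2. unfold unit_rate_time.
  assert (b1 / N < b2 / N) by (apply Rmult_lt_compat_r; [apply Rinv_0_lt_compat|]; lra).
  assert (0 < 1 - b2 / N) by (apply one_sub_div_pos; lra).
  assert (ln (1 - b2 / N) < ln (1 - b1 / N)) by (apply ln_increasing; lra).
  lra.
Qed.

Lemma unit_rate_time_le (b1 b2 : R) :
  b1 <= b2 -> b2 < N -> unit_rate_time N b1 <= unit_rate_time N b2.
Proof.
  intros H12 H2. destruct (Req_dec b1 b2) as [->|Hne]; [lra|].
  left; apply unit_rate_time_lt; lra.
Qed.

Lemma exp_opp_unit_rate_time (b : R) : b < N -> exp (- unit_rate_time N b) = 1 - b / N.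
Proof.
  intro Hb. unfold unit_rate_time. rewrite Ropp_involutive.
  apply exp_ln, one_sub_div_pos; exact Hb.
Qed.

End UnitRateTime.

Section PushPhase.

Variables N l lpu alpha : R.
Hypotheses (HN : 0 < N) (Hl : 0 < l) (Hlpu : 0 < lpu)
  (Ha0 : 0 <= alpha) (HaN : alpha < N).

Lemma t_alpha_unit_rate : t_alpha N l alpha = unit_rate_time N alpha / l.
Proof. unfold t_alpha, unit_rate_time. field. lra. Qed.

Lemma viewcount_at_unit_rate_time (b : R) :
  b < N -> N * (1 - exp (- l * (unit_rate_time N b / l))) = b.
Proof.
  intro Hb. replace (- l * (unit_rate_time N b / l)) with (- unit_rate_time N b)
    by (field; lra).
  rewrite exp_opp_unit_rate_time by lra. field. lra.
Qed.

(* The push phase alone brings the viewcount to [alpha] at [t_alpha]; the pull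
   phase only adds views afterwards. *)
Lemma viewcount_gt_after_t_alpha (t : R) :
  t_alpha N l alpha < t -> alpha < viewcount N l lpu alpha t.
Proof.
  intro Ht. unfold viewcount.
  destruct (Rle_dec t (t_alpha N l alpha)) as [C|_]; [lra|].
  assert (Hexp : exp (- l * t) < exp (- l * t_alpha N l alpha))
    by (apply exp_increasing; nra).
  assert (Hreach : N * (1 - exp (- l * t_alpha N l alpha)) = alpha)
    by (rewrite t_alpha_unit_rate; apply viewcount_at_unit_rate_time; lra).
  nra.
Qed.

Lemma viewcount_eq_iff (b t : R) : 0 <= b <= alpha ->
  (0 <= t /\ viewcount N l lpu alpha t = b) <-> t = unit_rate_time N b / l.
Proof.
  intros Hb.
  assert (Hmono : unit_rate_time N b / l <= t_alpha N l alpha).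
  { rewrite t_alpha_unit_rate. apply Rmult_le_compat_r;
      [left; apply Rinv_0_lt_compat; lra | apply unit_rate_time_le; lra]. }
  split.
  - intros [Ht Hv].
    destruct (Rle_dec t (t_alpha N l alpha)) as [Hle|Hgt].
    + unfold viewcount in Hv. destruct (Rle_dec _ _) as [_|]; [|contradiction].
      assert (He : exp (- l * t) = exp (- unit_rate_time N b)).
      { rewrite exp_opp_unit_rate_time, <- Hv by lra. field. lra. }
      apply exp_inv in He.
      replace t with (- (- l * t) / l) by (field; lra).
      rewrite He. field. lra.
    + apply Rnot_le_lt, viewcount_gt_after_t_alpha in Hgt. lra.
  - intros ->. split.
    + apply Rmult_le_pos; [|left; apply Rinv_0_lt_compat; lra].
      rewrite <- (unit_rate_time_0 N). apply unit_rate_time_le; lra.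
    + unfold viewcount. destruct (Rle_dec _ _) as [_|]; [|contradiction].
      apply viewcount_at_unit_rate_time. lra.
Qed.

Lemma t_beta_push_phase (b : R) :
  0 <= b <= alpha -> t_beta N l lpu alpha b = unit_rate_time N b / l.
Proof.
  intro Hb. apply Glb_Rbar_singleton. intro t. apply viewcount_eq_iff, Hb.
Qed.

End PushPhase.

Section Maximizers.

Variables (f : R -> R) (alpha : R).
Hypothesis Ha0 : 0 <= alpha.

Lemma is_maximizer_increasing :
  (forall b1 b2, 0 <= b1 -> b1 < b2 -> b2 <= alpha -> f b1 < f b2) ->
  forall beta, is_maximizer f alpha beta <-> beta = alpha.
Proof.
  intros Hinc beta. split.
  - intros [Hb Hmax]. destruct (Req_dec beta alpha) as [|Hne]; [assumption|].
    specialize (Hmax alpha ltac:(lra)). specialize (Hinc beta alpha). lra.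
  - intros ->. split; [lra|]. intros b Hb.
    destruct (Req_dec b alpha) as [->|]; [lra|]. left; apply Hinc; lra.
Qed.

Lemma is_maximizer_decreasing :
  (forall b1 b2, 0 <= b1 -> b1 < b2 -> b2 <= alpha -> f b2 < f b1) ->
  forall beta, is_maximizer f alpha beta <-> beta = 0.
Proof.
  intros Hdec beta. split.
  - intros [Hb Hmax]. destruct (Req_dec beta 0) as [|Hne]; [assumption|].
    specialize (Hmax 0 ltac:(lra)). specialize (Hdec 0 beta). lra.
  - intros ->. split; [lra|]. intros b Hb.
    destruct (Req_dec b 0) as [->|]; [lra|]. left; apply Hdec; lra.
Qed.

Lemma is_maximizer_const (k : R) :
  (forall b, 0 <= b <= alpha -> f b = k) ->
  forall beta, 0 <= beta <= alpha -> is_maximizer f alpha beta.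
Proof.
  intros Hk beta Hb. split; [exact Hb|]. intros b Hb'. rewrite !Hk by assumption. lra.
Qed.

End Maximizers.

Lemma utility_push_phase (tau piG N lG lB lpu alpha b : R) :
  0 < N -> 0 < lpu -> 0 < lB -> 0 < lG -> alpha < N -> 0 <= b <= alpha ->
  utility tau piG N lG lB lpu alpha b
  = tau * (2 * piG - 1) + ((1 - piG) / lB - piG / lG) * unit_rate_time N b.
Proof.
  intros HN Hlpu HlB HlG HaN Hb. unfold utility.
  rewrite !(t_beta_push_phase N _ lpu alpha) by lra. field. lra.
Qed.

Lemma slope_ratio_gap (piG lG lB : R) :
  0 < lB -> 0 < lG -> 0 < 1 - piG ->
  (1 - piG) / lB - piG / lG = - ((1 - piG) / lG) * (piG / (1 - piG) - lG / lB).
Proof. intros. field. lra. Qed.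

Theorem lemma2 (tau piG N lG lB lpu alpha : R)
  (Htau : 0 < tau) (HN : 0 < N) (Hlpu : 0 < lpu)
  (HlB : 0 < lB) (HlGB : lB < lG)
  (HpiG : 0 <= piG) (HpiB : 0 < 1 - piG)
  (Ha0 : 0 <= alpha) (HaN : alpha < N) :
  let U := utility tau piG N lG lB lpu alpha in
  (piG / (1 - piG) < lG / lB ->
     forall beta, is_maximizer U alpha beta <-> beta = alpha) /\
  (piG / (1 - piG) > lG / lB ->
     forall beta, is_maximizer U alpha beta <-> beta = 0) /\
  (piG / (1 - piG) = lG / lB ->
     forall beta, 0 <= beta <= alpha -> is_maximizer U alpha beta).
Proof.
  intro U.
  set (c := (1 - piG) / lB - piG / lG).
  assert (HU : forall b, 0 <= b <= alpha ->
    U b = tau * (2 * piG - 1) + c * unit_rate_time N b)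
    by (intros; apply utility_push_phase; lra).
  assert (Hc : c = - ((1 - piG) / lG) * (piG / (1 - piG) - lG / lB))
    by (apply slope_ratio_gap; lra).
  assert (Hw : 0 < (1 - piG) / lG) by (apply Rdiv_lt_0_compat; lra).
  assert (Hmono : forall b1 b2, 0 <= b1 -> b1 < b2 -> b2 <= alpha ->
    unit_rate_time N b1 < unit_rate_time N b2)
    by (intros; apply unit_rate_time_lt; lra).
  split; [|split].
  - intros Hlt. assert (Hc_pos : 0 < c) by (rewrite Hc; nra).
    apply is_maximizer_increasing; [lra|]. intros b1 b2 ? ? ?.
    rewrite !HU by lra. specialize (Hmono b1 b2). nra.
  - intros Hgt. assert (Hc_neg : c < 0) by (rewrite Hc; nra).
    apply is_maximizer_decreasing; [lra|]. intros b1 b2 ? ? ?.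
    rewrite !HU by lra. specialize (Hmono b1 b2). nra.
  - intros Heq. apply (is_maximizer_const _ _ (tau * (2 * piG - 1))).
    intros b Hb. rewrite HU, Hc, Heq by lra. ring.
Qed.
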